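(* Assume the network is regular. Let $j^*\in\mathcal E$ and $m'\in\mathcal M$. Then $j^*\leadsto m'$ if and only if there exists a partial child selection $J^\vee:\mathcal M\setminus\{m'\}\to\mathcal E\setminus\{j^*\}$ (injective, with $m\vdash J^\vee(m)$ for all $m\ne m'$) such that the augmented set $\{j^*\}\cup J^\vee(\mathcal M\setminus\{m'\})$ selects an $S$-basis.
   Context: A reaction network consists of a finite set of metabolites $\mathcal M=\{1,\dots,M\}$ and a finite set of reactions $\mathcal E=\{1,\dots,E\}$. Each reaction $j$ has an input stoichiometric vector $y^j\in\mathbb R_{\ge0}^M$ and an output stoichiometric vector $\bar y^j\in\mathbb R_{\ge0}^M$. Write $m\vdash j$ iff $y^j_m\neq 0$. The stoichiometric matrix $S$ is the real $M\times E$ matrix whose $j$-th column is $S^j=\bar y^j-y^j$; it is assumed to have full rank $M$. The rate matrix $R=(r_{jm})$ is the $E\times M$ matrix whose entries $r_{jm}$ with $m\vdash j$ are independent indeterminates, and $r_{jm}=0$ whenever $m\not\vdash j$. ''Nonzero algebraically'' means nonzero as a polynomial/rational function in these indeterminates. For $\mathcal E'\subseteq\mathcal E$, $S^{\mathcal E'}$ denotes the submatrix of columns indexed by $\mathcal E'$; $\mathcal E'$ selects an $S$-basis if $|\mathcal E'|=M$ and $\det S^{\mathcal E'}\neq0$. A child selection is an injective map $J:\mathcal M\to\mathcal E$ with $m\vdash J(m)$ for all $m$. The network is regular if $\det(SR)\ne0$ algebraically. Let $B=\begin{pmatrix}-\mathrm{id}_{\mathcal E}&R\\ S&0\end{pmatrix}$,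 a square matrix with rows and columns indexed by the disjoint union $\mathcal E\sqcup\mathcal M$; for a regular network it is invertible over the field of rational functions in the $r_{jm}$. For $\alpha\in\mathcal E\sqcup\mathcal M$ set $z^\alpha=-B^{-1}e_\alpha$, and write $\alpha\leadsto\beta$ for $\beta\in\mathcal E\sqcup\mathcal M$ if $z^\alpha_\beta$ is nonzero algebraically. (For $j^*\in\mathcal E$, the $\mathcal M$-part of $z^{j^*}$ is $\delta x^{j^*}=-(SR)^{-1}Se_{j^*}$.) *)

From HB Require Import structures.
From mathcomp Require Import all_boot all_order all_algebra.
Set Implicit Arguments. Unset Strict Implicit. Unset Printing Implicit Defensive.
Import Order.TTheory GRing.Theory Num.Theory.
Local Open Scope ring_scope.

(* Polynomial ring in n commuting indeterminates over an integral domain R,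
   built as iterated univariate polynomials R[x_0][x_1]...[x_{n-1}]. *)
Fixpoint mpoly (R : idomainType) (n : nat) : idomainType :=
  if n is n'.+1 then ({poly mpoly R n'} : idomainType) else R.

Fixpoint mconst (R : idomainType) (n : nat) (c : R) : mpoly R n :=
  if n is n'.+1 return mpoly R n then (mconst n' c)%:P else c.

(* the indeterminate x_i (i < n) in R[x_0,...,x_{n-1}] (0 if i >= n) *)
Fixpoint mvar (R : idomainType) (n : nat) (i : nat) : mpoly R n :=
  if n is n'.+1 return mpoly R n then
    (if i == n' then 'X else (mvar R n' i)%:P) else 0.

Definition ratfun (R : idomainType) (n : nat) : fieldType := {fraction (mpoly R n)}.

Section Network.
Variables (F : realFieldType) (M E : nat).
(* y, ybar : M x E matrices whose j-th columns are the input / output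
   stoichiometric vectors y^j, ybar^j. *)
Variables (y ybar : 'M[F]_(M, E)).

Definition stoich : 'M[F]_(M, E) := ybar - y.

(* m |- j  iff  y^j_m <> 0 *)
Definition dep (m : 'I_M) (j : 'I_E) : bool := y m j != 0.

Definition nvars : nat := (E * M)%N.
Definition K : fieldType := ratfun F nvars.

(* indeterminate r_{jm} is variable number j*M + m *)
Definition rvar (j : 'I_E) (m : 'I_M) : K :=
  FracField.tofrac (mvar F nvars (j * M + m)%N).

Definition rateK : 'M[K]_(E, M) :=
  \matrix_(j, m) (if dep m j then rvar j m else 0).

Definition stoichK : 'M[K]_(M, E) :=
  map_mx (fun c : F => FracField.tofrac (mconst nvars c)) stoich.

Definition regular : bool := \det (stoichK *m rateK) != 0.

Definition Bmat : 'M[K]_(E + M) := block_mx (- 1%:M) rateK stoichK 0.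

(* z^alpha = - B^{-1} e_alpha ; z^alpha_beta *)
Definition zvec (alpha beta : 'I_(E + M)) : K := - (invmx Bmat) beta alpha.

Definition leadsto (alpha beta : 'I_(E + M)) : bool := zvec alpha beta != 0.

(* E' selects an S-basis: |E'| = M and det S^{E'} <> 0 (columns of S^{E'}
   listed via some bijection 'I_M -> E'; the nonvanishing of the determinant
   does not depend on the ordering). *)
Definition selects_basis (Es : {set 'I_E}) : Prop :=
  exists f : 'I_M -> 'I_E,
    [/\ injective f, [set f k | k : 'I_M] = Es & \det (colsub f stoich) != 0].

End Network.

From HB Require Import structures.
From mathcomp Require Import all_boot all_order all_algebra perm.

Set Implicit Arguments.
Unset Strict Implicit.
Unset Printing Implicit Defensive.
Import Order.TTheory GRing.Theory Num.Theory.
Local Open Scope ring_scope.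

(* By the block inverse of B, z^{j^*}_{m'} is the entry of (SR)^{-1} S in row
   m' and column j^*, so by Cramer's rule it vanishes iff det (S R') = 0, where
   R' is R with its column m' replaced by the unit vector e_{j^*}.  Expanding
   det (S R') as a sum over maps f : M -> E of det S^{f(M)} times
   prod_m R'_{f(m) m}, a nonzero term is exactly a child selection f of
   M minus m', extended by f(m') = j^*, whose columns form an S-basis.
   Conversely, for such an f, evaluating r_{jm} at the 0/1 pattern of f
   turns det (S R') into det S^{f(M)} <> 0. *)

Lemma det_mulmx_colsub (R : comNzRingType) m n
    (S : 'M[R]_(m, n)) (T : 'M[R]_(n, m)) :
  \det (S *m T) =
  \sum_(f : {ffun 'I_m -> 'I_n}) (\prod_i T (f i) i) * \det (colsub f S).
Proof.
rewrite -det_tr /determinant.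
transitivity (\sum_(s : 'S_m) \sum_(f : {ffun 'I_m -> 'I_n})
   (\prod_i T (f i) i) * ((-1) ^+ s * \prod_i S (s i) (f i))).
  apply: eq_bigr => s _.
  have -> : \prod_i (S *m T)^T i (s i) = \prod_i \sum_k S (s i) k * T k i.
    by apply: eq_bigr => i _; rewrite !mxE.
  rewrite bigA_distr_bigA mulr_sumr; apply: eq_bigr => f _.
  by rewrite big_split /= mulrA [LHS]mulrC.
rewrite exchange_big /=; apply: eq_bigr => f _.
have -> : \sum_(s : 'S_m) (-1) ^+ s * \prod_i colsub f S i (s i) =
          \det (colsub f S)^T by rewrite det_tr.
rewrite /determinant mulr_sumr; apply: eq_bigr => s _.
by congr (_ * (_ * _)); apply: eq_bigr => i _; rewrite !mxE.
Qed.

Lemma invmx_saddle_block (K : fieldType) m e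
    (S : 'M[K]_(m, e)) (R : 'M[K]_(e, m)) :
  S *m R \in unitmx ->
  invmx (block_mx (- 1%:M) R S 0) =
  block_mx (R *m invmx (S *m R) *m S - 1%:M) (R *m invmx (S *m R))
           (invmx (S *m R) *m S) (invmx (S *m R)).
Proof.
move=> unitSR; set X := invmx (S *m R).
set B := block_mx _ _ _ _; set C := block_mx _ _ _ _.
have BC : B *m C = 1%:M.
  rewrite /B /C mulmx_block [1%:M as X in _ = X]scalar_mx_block.
  rewrite !mulNmx !mul1mx !mul0mx !addr0.
  congr block_mx.
  - by rewrite mulmxA opprB subrK.
  - by rewrite addNr.
  - by rewrite mulmxBr mulmx1 !mulmxA mulmxV // mul1mx subrr.
  - by rewrite mulmxA mulmxV.
have [unitB _] := mulmx1_unit BC.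
by rewrite -[C](mulKmx unitB) BC mulmx1.
Qed.

Lemma invmx_mulmx_cramer (K : fieldType) n e (A B : 'M[K]_n) (S : 'M[K]_(n, e))
    (i0 : 'I_n) (j : 'I_e) :
  A \in unitmx -> (forall i, B i i0 = S i j) -> col' i0 B = col' i0 A ->
  (invmx A *m S) i0 j = (\det A)^-1 * \det B.
Proof.
move=> unitA Bi0 BE.
rewrite /invmx unitA -scalemxAl mxE; congr (_ * _).
rewrite mxE (expand_det_col B i0); apply: eq_bigr => k _.
by rewrite Bi0 mxE /cofactor BE mulrC.
Qed.

Lemma det_colsub_neq0_imset (R : comNzRingType) m e (S : 'M[R]_(m, e))
    (f g : 'I_m -> 'I_e) :
  injective f -> injective g -> [set f k | k : 'I_m] = [set g k | k : 'I_m] ->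
  \det (colsub g S) != 0 -> \det (colsub f S) != 0.
Proof.
move=> f_inj g_inj fg_im detg.
have gf_pre k : exists k', g k' == f k.
  have : f k \in [set g k | k : 'I_m] by rewrite -fg_im imset_f.
  by case/imsetP => k' _ ->; exists k'.
pose s k := odflt k [pick k' | g k' == f k].
have gsE k : g (s k) = f k.
  rewrite /s; case: pickP => [k' /eqP //|none].
  by case: (gf_pre k) => k'; rewrite none.
have s_inj : injective s by move=> a b sab; apply: f_inj; rewrite -!gsE sab.
have -> : colsub f S = col_perm (perm s_inj) (colsub g S).
  by apply/matrixP => i k; rewrite !mxE permE gsE.
rewrite col_permE det_mulmx det_perm.
by case: (odd_perm _); rewrite ?expr0 ?expr1 ?mulr1 ?mulrN1 ?oppr_eq0.
Qed.

Lemma det_colsub_neq0_inj (R : comNzRingType) m e (S : 'M[R]_(m, e))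
    (f : 'I_m -> 'I_e) :
  \det (colsub f S) != 0 -> injective f.
Proof.
move=> detf a b fab; apply/eqP; apply: contraR detf => neq_ab.
by rewrite -det_tr (determinant_alternate neq_ab) // => k; rewrite !mxE fab.
Qed.

Lemma imsetT_U1 (T T' : finType) (g : T -> T') (x : T) :
  [set g k | k : T] = g x |: [set g k | k in [set k | k != x]].
Proof.
apply/setP => z; rewrite in_setU1; apply/imsetP/idP => [[k _ ->]|].
  case: (eqVneq k x) => [->|ne]; rewrite ?eqxx //; apply/orP; right.
  by apply/imsetP; exists k; rewrite ?inE.
by case/orP => [/eqP ->|/imsetP [k _ ->]]; [exists x | exists k].
Qed.

Section MpolyMorphisms.
Variable R : idomainType.

Fixpoint mconst_rmorph (n : nat) : {rmorphism R -> mpoly R n} :=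
  if n is n'.+1 return {rmorphism R -> mpoly R n} then
    (polyC \o mconst_rmorph n')%FUN else idfun.

Lemma mconst_rmorphE n c : mconst_rmorph n c = mconst n c.
Proof. by elim: n => [//|n IH]; rewrite /= IH. Qed.

Variable a : nat -> R.

Fixpoint meval (n : nat) : {rmorphism mpoly R n -> R} :=
  if n is n'.+1 return {rmorphism mpoly R n -> R} then
    (horner_eval (a n') \o map_poly (meval n'))%FUN else idfun.

Lemma mevalS n (p : {poly mpoly R n}) :
  meval n.+1 p = (map_poly (meval n) p).[a n].
Proof. by []. Qed.

Lemma meval_mconst n c : meval n (mconst n c) = c.
Proof.
elim: n => [//|n IH].
by rewrite (mevalS (mconst n c)%:P) map_polyC hornerC.
Qed.

Lemma meval_mvar n i : (i < n)%N -> meval n (mvar R n i) = a i.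
Proof.
elim: n => [//|n IH]; rewrite ltnS leq_eqVlt.
case: (eqVneq i n) => [->|ne] lt_in; rewrite [mvar _ _ _]/= ?eqxx ?(negbTE ne).
  by rewrite (mevalS 'X) map_polyX hornerX.
by rewrite (mevalS (mvar R n i)%:P) map_polyC hornerC; apply: IH.
Qed.

End MpolyMorphisms.

Lemma rvar_index_eq M (k1 k2 : nat) (m1 m2 : 'I_M) :
  (k1 * M + m1 == k2 * M + m2)%N = (k1 == k2) && (m1 == m2).
Proof.
apply/eqP/andP => [eq12|[/eqP -> /eqP -> //]].
have Mpos : (0 < M)%N := leq_ltn_trans (leq0n _) (ltn_ord m1).
have em : (m1 : nat) = m2.
  by move/(congr1 (modn^~ M)): eq12; rewrite !modnMDl !modn_small.
have ek : k1 = k2.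
  by move/(congr1 (divn^~ M)): eq12; rewrite !divnMDl // !divn_small // !addn0.
by split; apply/eqP => //; apply: val_inj.
Qed.

Lemma rvar_index_lt M E (k : 'I_E) (m : 'I_M) : (k * M + m < nvars M E)%N.
Proof.
rewrite /nvars (leq_trans (_ : _ < k * M + M)%N) ?ltn_add2l //.
by rewrite -mulSnr leq_mul2r ltn_ord orbT.
Qed.

Section Reachability.
Variables (F : realFieldType) (M E : nat) (y ybar : 'M[F]_(M, E)).
Variables (jstar : 'I_E) (m' : 'I_M).

Local Notation n := (nvars M E).
Local Notation S := (stoich y ybar).

Definition stoichP : 'M[mpoly F n]_(M, E) := map_mx (mconst n) S.

Definition rateP_swap : 'M[mpoly F n]_(E, M) := \matrix_(k, m)
  if m == m' then (k == jstar)%:R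
  else if dep y m k then mvar F n (k * M + m) else 0.

Definition augmented_selection (f : 'I_M -> 'I_E) : Prop :=
  [/\ injective f, f m' = jstar & forall m, m != m' -> dep y m (f m)].

Lemma leadsto_det_swap : regular y ybar ->
  leadsto y ybar (lshift M jstar) (rshift E m') =
  (\det (stoichP *m rateP_swap) != 0).
Proof.
move=> reg; have unitSR : stoichK y ybar *m rateK y \in unitmx.
  by rewrite unitmxE unitfE.
rewrite /leadsto /zvec oppr_eq0 /Bmat invmx_saddle_block // block_mxEdl.
rewrite (@invmx_mulmx_cramer _ _ _ _
           (map_mx (@FracField.tofrac _) (stoichP *m rateP_swap)) _ _ _ unitSR).
- by rewrite mulf_eq0 invr_eq0 negb_or (negbTE reg) det_map_mx tofrac_eq0.
- move=> i; rewrite !mxE (bigD1 jstar) //= big1 => [|k /negbTE nk]; last first.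
    by rewrite !mxE eqxx nk mulr0.
  by rewrite !mxE !eqxx mulr1 addr0.
- apply/matrixP => i l; rewrite !mxE rmorph_sum; apply: eq_bigr => k _.
  rewrite rmorphM !mxE eq_sym (negbTE (neq_lift _ _)) /rvar.
  by case: dep; rewrite ?rmorph0.
Qed.

Lemma selection_of_det_swap : \det (stoichP *m rateP_swap) != 0 ->
  exists f, augmented_selection f /\ \det (colsub f S) != 0.
Proof.
rewrite det_mulmx_colsub => det_neq0.
have [f] : exists f : {ffun 'I_M -> 'I_E},
    (\prod_i rateP_swap (f i) i) * \det (colsub f stoichP) != 0.
  apply/existsP; apply: contraR det_neq0 => /existsPn term0.
  by rewrite big1 // => f _; apply/eqP; move: (term0 f); rewrite negbK.
rewrite mulf_eq0 negb_or => /andP[/prodf_neq0 rate_f detfP].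
have detf : \det (colsub f S) != 0.
  have colsubP : colsub f stoichP = map_mx (mconst_rmorph F n) (colsub f S).
    by apply/matrixP => i k; rewrite !mxE mconst_rmorphE.
  move: detfP; rewrite colsubP det_map_mx.
  by apply: contra => /eqP ->; rewrite rmorph0.
exists f; split => //; split; first exact: det_colsub_neq0_inj detf.
  move: (rate_f m' isT); rewrite mxE eqxx.
  by case: (f m' =P jstar) => // _; rewrite /= mulr0n eqxx.
move=> m ne; move: (rate_f m isT); rewrite mxE (negbTE ne).
by case: dep; rewrite ?eqxx.
Qed.

Lemma det_swap_of_selection f : augmented_selection f ->
  \det (colsub f S) != 0 -> \det (stoichP *m rateP_swap) != 0.
Proof.
case=> _ fm' fdep detf.
pose a i := (i \in [seq (f m * M + m)%N | m : 'I_M])%:R : F.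
have aE (k : 'I_E) (m : 'I_M) : a (k * M + m)%N = (k == f m)%:R.
  congr (nat_of_bool _)%:R.
  apply/imageP/eqP => [[m2 _ /eqP]|->]; last by exists m.
  by rewrite rvar_index_eq => /andP[/eqP k_fm2 /eqP ->]; apply: val_inj.
have meval_rate : map_mx (meval a n) rateP_swap = colsub f 1%:M.
  apply/matrixP => k m; rewrite !mxE; case: eqVneq => [->|ne].
    by rewrite fm' rmorph_nat.
  case depk: (dep y m k).
    by rewrite meval_mvar ?aE ?rvar_index_lt.
  rewrite rmorph0; case: eqVneq => [kfm|//].
  by move: (fdep m ne); rewrite -kfm depk.
have meval_stoich : map_mx (meval a n) stoichP = S.
  by apply/matrixP => i k; rewrite !mxE meval_mconst.
apply: contra detf => /eqP det0.
have -> : colsub f S = S *m colsub f 1%:M by rewrite mulmx_colsub mulmx1.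
rewrite -meval_stoich -meval_rate -map_mxM.
by rewrite det_map_mx det0 rmorph0.
Qed.

Definition extend_selection (J : 'I_M -> 'I_E) m :=
  if m == m' then jstar else J m.

Lemma imset_extend_selection J :
  [set extend_selection J m | m : 'I_M] =
  jstar |: [set J m | m in [set m | m != m']].
Proof.
rewrite (imsetT_U1 _ m') /extend_selection eqxx; congr (_ |: _).
by apply: eq_in_imset => m; rewrite inE => /negbTE ->.
Qed.

Lemma augmented_extend_selection J :
  (forall m1 m2, m1 != m' -> m2 != m' -> J m1 = J m2 -> m1 = m2) ->
  (forall m, m != m' -> J m != jstar /\ dep y m (J m)) ->
  augmented_selection (extend_selection J).
Proof.
rewrite /extend_selection => J_inj J_child; split; rewrite ?eqxx //; last first.
  by move=> m ne; rewrite (negbTE ne) (J_child m ne).2.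
move=> a b; case: (eqVneq a m') => [->|na]; case: (eqVneq b m') => [->|nb] //.
- by move=> jb; have := (J_child b nb).1; rewrite -jb eqxx.
- by move=> ja; have := (J_child a na).1; rewrite ja eqxx.
- exact: J_inj.
Qed.

End Reachability.

Theorem theorem2p3 (F : realFieldType) (M E : nat) (y ybar : 'M[F]_(M, E))
  (hy : forall m j, 0 <= y m j) (hybar : forall m j, 0 <= ybar m j)
  (hrank : \rank (stoich y ybar) = M)
  (hreg : regular y ybar)
  (jstar : 'I_E) (m' : 'I_M) :
  leadsto y ybar (lshift M jstar) (rshift E m') <->
  exists J : 'I_M -> 'I_E,
    [/\ (forall m1 m2, m1 != m' -> m2 != m' -> J m1 = J m2 -> m1 = m2),
        (forall m, m != m' -> J m != jstar /\ dep y m (J m)) &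
        selects_basis y ybar (jstar |: [set J m | m in [set m | m != m']])].
Proof.
rewrite leadsto_det_swap //; split.
  case/selection_of_det_swap => f [[f_inj fm' fdep] detf].
  exists f; split.
  - by move=> m1 m2 _ _; apply: f_inj.
  - by move=> m ne; rewrite -fm' (inj_eq f_inj) ne fdep.
  - by exists f; rewrite -fm' -imsetT_U1.
case=> J [J_inj J_child [g [g_inj g_im detg]]].
have f_sel := augmented_extend_selection J_inj J_child.
apply: (det_swap_of_selection f_sel); have [f_inj _ _] := f_sel.
apply: det_colsub_neq0_imset f_inj g_inj _ detg.
by rewrite imset_extend_selection.
Qed.
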